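(* Let $h>0$ and let $\Gamma_h\subset\mathbf{R}^3$ be the closed curve on the cylinder $x^2+y^2=1$ given by $\Gamma_h(t)=(\cos t,\sin t,z(t))$, $t\in[0,2\pi]$, where $z$ is the continuous piecewise linear function with $z(0)=z(\pi)=z(2\pi)=h/2$, $z(\pi/2)=z(3\pi/2)=-h/2$, linear on each interval $[k\pi/2,(k+1)\pi/2]$, $k=0,1,2,3$. (Thus $\Gamma_h$ consists of four helical segments joining cyclically the points $p_1=(1,0,h/2)$, $p_2=(0,1,-h/2)$, $p_3=(-1,0,h/2)$, $p_4=(0,-1,-h/2)$.) Let $\overline\Gamma_h$ be the orthogonal projection of $\Gamma_h$ into the $xz$-plane. Then the width of $\Gamma_h$ equals the width of $\overline\Gamma_h$.
   Context: The width of a set in $\mathbf{R}^3$ is the infimum of the distances between pairs of parallel planes such that the set lies between them. The width of the planar set $\overline\Gamma_h$ (in the $xz$-plane) is the infimum of the distances between pairs of parallel lines in the $xz$-plane such that $\overline\Gamma_h$ lies between them. *)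

From HB Require Import structures.
From mathcomp Require Import all_boot all_order all_algebra.
From mathcomp Require Import all_classical all_reals.
From mathcomp Require Import topology normedtype sequences exp trigo.
Set Implicit Arguments. Unset Strict Implicit. Unset Printing Implicit Defensive.
Import Order.TTheory GRing.Theory Num.Theory.
Local Open Scope classical_set_scope.
Local Open Scope ring_scope.

Section Defs.
Variable R : realType.

Definition zfun (h t : R) : R :=
  if t <= pi / 2 then h / 2 - h * (t / (pi / 2))
  else if t <= pi then - (h / 2) + h * ((t - pi / 2) / (pi / 2))
  else if t <= 3 * pi / 2 then h / 2 - h * ((t - pi) / (pi / 2))
  else - (h / 2) + h * ((t - 3 * pi / 2) / (pi / 2)).

Definition Gamma (h : R) : set (R * R * R) :=
  [set p | exists t, 0 <= t <= 2 * pi /\ p = (cos t, sin t, zfun h t)].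

Definition Gammabar (h : R) : set (R * R) :=
  [set q | exists t, 0 <= t <= 2 * pi /\ q = (cos t, zfun h t)].

(* Width in R^3: infimum of distances between pairs of parallel planes
   {u.x = a}, {u.x = b} (u <> 0) such that the set lies between them. *)
Definition width3 (S : set (R * R * R)) : R :=
  inf [set d | exists (u1 u2 u3 a b : R),
        (u1, u2, u3) != (0, 0, 0) /\
        (forall p, S p -> a <= u1 * p.1.1 + u2 * p.1.2 + u3 * p.2 <= b) /\
        d = `|b - a| / Num.sqrt (u1 ^+ 2 + u2 ^+ 2 + u3 ^+ 2)].

(* Width in the plane: infimum of distances between pairs of parallel lines
   {u.x = a}, {u.x = b} (u <> 0) such that the set lies between them. *)
Definition width2 (S : set (R * R)) : R :=
  inf [set d | exists (u1 u2 a b : R),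
        (u1, u2) != (0, 0) /\
        (forall p, S p -> a <= u1 * p.1 + u2 * p.2 <= b) /\
        d = `|b - a| / Num.sqrt (u1 ^+ 2 + u2 ^+ 2)].

End Defs.

(* A planar slab containing the projection lifts (with u2 = 0) to a slab of
   the same width containing Gamma_h.  Conversely, let a <= u.p <= b on
   Gamma_h.  Since Gamma_h is symmetric under x -> -x and y -> -y, and
   (u, a, b) may be replaced by (-u, -b, -a), we may take u1, u2, u3 >= 0 and write
   (u1, u2) = r (cos al, sin al) with 0 <= al <= pi/2.  Comparing u.p at a point
   of the arc over [0, pi/2] with one of the arc over [pi, 3pi/2] gives
   b - a >= r (1 + sin s) + u3 (h - k s) for every s in [0, pi/2], with
   k = 2h/pi.  Every point of the projection is (cos t, -h/2 + k s) with
   cos t >= - sin s, so this bound says exactly that the planar slab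
   r + u3 h/2 - (b - a) <= r x + u3 z <= r + u3 h/2 contains the projection;
   it has the same width.  Hence both widths are infima of the same set. *)

From HB Require Import structures.
From mathcomp Require Import all_boot all_order all_algebra.
From mathcomp Require Import all_classical all_reals.
From mathcomp Require Import topology normedtype sequences exp trigo.
From mathcomp Require Import ring lra.
Set Implicit Arguments.
Unset Strict Implicit.
Unset Printing Implicit Defensive.

Import Order.TTheory GRing.Theory Num.Theory.
Local Open Scope classical_set_scope.
Local Open Scope ring_scope.

Section Trigonometry.
Variable R : realType.
Implicit Types x y s al : R.

Lemma cosD3pihalf x : cos (x + 3 * pi / 2) = sin x.
Proof.
have -> : x + 3 * pi / 2 = (x + pi / 2) + pi by field.
by rewrite cosDpi cosDpihalf opprK.
Qed.

Lemma sinD3pihalf x : sin (x + 3 * pi / 2) = - cos x.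
Proof.
have -> : x + 3 * pi / 2 = (x + pi / 2) + pi by field.
by rewrite sinDpi sinDpihalf.
Qed.

Lemma ler_cos_0pi x y : 0 <= x -> x <= y -> y <= pi -> cos y <= cos x.
Proof.
move=> x_ge0 xy y_lepi; have [->|x_neq_y] := eqVneq x y; first exact: lexx.
apply: ltW; rewrite ltr_cos ?in_itv /= ?x_ge0 ?y_lepi ?(le_trans x_ge0 xy) //.
  by rewrite lt_neqAle x_neq_y.
by rewrite (le_trans xy y_lepi).
Qed.

Lemma cosB_add_sin_ge s al : 0 <= s -> s <= al -> al <= pi / 2 ->
  1 + sin s <= cos (al - s) + sin al.
Proof.
move=> s_ge0 s_le_al al_le; have pi_gt0 := @pi_gt0 R.
set x := (al + s) / 2; set y := (al - s) / 2.
(* with x, y the half sum and half difference, the gap is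
   2 sin y (cos x - sin y), and x <= pi/2 - y *)
have cos_diff : cos (al - s) = 1 - 2 * sin y ^+ 2.
  rewrite (_ : al - s = y + y); last by rewrite /y; field.
  by rewrite cosD -!expr2 cos2sin2; ring.
have sin_diff : sin al - sin s = 2 * cos x * sin y.
  rewrite (_ : al = x + y); last by rewrite /x /y; field.
  rewrite (_ : s = x - y); last by rewrite /x /y; field.
  by rewrite sinD sinB; ring.
have sin_y_ge0 : 0 <= sin y by apply: sin_ge0_pi; rewrite /y; apply/andP; split; lra.
have sin_y_le : sin y <= cos x.
  rewrite -cosBpihalf -cosN opprB.
  apply: ler_cos_0pi; rewrite /x /y; lra.
nra.
Qed.

Lemma polar_nonneg (u1 u2 : R) : 0 <= u1 -> 0 <= u2 ->
  exists2 al, 0 <= al <= pi / 2 &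
    u1 = Num.sqrt (u1 ^+ 2 + u2 ^+ 2) * cos al /\
    u2 = Num.sqrt (u1 ^+ 2 + u2 ^+ 2) * sin al.
Proof.
move=> u1_ge0 u2_ge0; have pi_gt0 := @pi_gt0 R.
set r := Num.sqrt _.
have r2 : r ^+ 2 = u1 ^+ 2 + u2 ^+ 2 by rewrite sqr_sqrtr // addr_ge0 // sqr_ge0.
have [r0|r_neq0] := eqVneq r 0.
  exists 0; first by apply/andP; split; lra.
  by move: r2; rewrite r0 !mul0r expr0n /=; split; nra.
have r_gt0 : 0 < r by rewrite lt_neqAle eq_sym r_neq0 sqrtr_ge0.
set c := u1 / r.
have c_ge0 : 0 <= c by apply: divr_ge0; lra.
have c_le1 : c <= 1 by rewrite ler_pdivrMr // mul1r; nra.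
have c_in : -1 <= c <= 1 by apply/andP; split; lra.
have [/andP[al_ge0 al_lepi] cos_al] := acos_def c_in.
exists (acos c).
  apply/andP; split => //; rewrite leNgt; apply/negP => al_gt.
  have : cos (acos c) < cos (pi / 2).
    by rewrite ltr_cos // in_itv /=; apply/andP; split; lra.
  by rewrite cos_al cos_pihalf; lra.
have u1E : u1 = r * cos (acos c) by rewrite cos_al /c mulrC divfK.
split=> //.
have sin_ge0 : 0 <= sin (acos c) by apply: sin_ge0_pi; apply/andP; split.
have r_sin_ge0 : 0 <= r * sin (acos c) by rewrite mulr_ge0 // ltW.
apply/eqP; rewrite -(@eqrXn2 _ 2) //; apply/eqP.
have := cos2Dsin2 (acos c); move: u1E r2; nra.
Qed.

End Trigonometry.

Section Helix.
Variables (R : realType) (h : R).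
Hypothesis h_gt0 : 0 < h.

Let k := h / (pi / 2).

Let k_gt0 : 0 < k.
Proof. by rewrite /k divr_gt0 // divr_gt0 // pi_gt0. Qed.

Let k_pi : k * pi = 2 * h.
Proof. have := @pi_gt0 R; rewrite /k => pi_gt0; field; lra. Qed.

Lemma zfunE t : zfun h t =
  if t <= pi / 2 then h / 2 - k * t
  else if t <= pi then - (h / 2) + k * (t - pi / 2)
  else if t <= 3 * pi / 2 then h / 2 - k * (t - pi)
  else - (h / 2) + k * (t - 3 * pi / 2).
Proof.
have slopeE x : h * (x / (pi / 2)) = k * x by rewrite mulrCA mulrC.
by rewrite /zfun !slopeE.
Qed.

Local Ltac zfun_arith :=
  have := @pi_gt0 R; have := k_pi; have := k_gt0; rewrite !zfunE;
  repeat (let H := fresh in case: ifPn => H; try rewrite -ltNge in H); nra.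

Lemma zfun_reflect_pi t : 0 <= t <= pi -> zfun h (pi - t) = zfun h t.
Proof. by move=> /andP[]; zfun_arith. Qed.

Lemma zfun_reflect_3pi t : pi <= t <= 2 * pi -> zfun h (3 * pi - t) = zfun h t.
Proof. by move=> /andP[]; zfun_arith. Qed.

Lemma zfun_reflect_2pi t : 0 <= t <= 2 * pi -> zfun h (2 * pi - t) = zfun h t.
Proof. by move=> /andP[]; zfun_arith. Qed.

Lemma zfun_drop t s : 0 <= t -> t <= s -> s <= pi / 2 ->
  zfun h t - zfun h (t - s + 3 * pi / 2) = h - k * s.
Proof. by zfun_arith. Qed.

Lemma zfun_valley t : 0 <= t <= 2 * pi ->
  exists2 s, 0 <= s <= pi / 2 & - sin s <= cos t /\ zfun h t = - (h / 2) + k * s.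
Proof.
move=> /andP[t_ge0 t_le]; have pi_gt0 := @pi_gt0 R; have := k_pi => kpiE.
rewrite zfunE; have [t1|t1] := leP t (pi / 2).
  exists (pi / 2 - t); first by apply/andP; split; lra.
  split; last by lra.
  have : 0 <= sin (pi / 2 - t) by apply: sin_ge0_pi; apply/andP; split; lra.
  have : 0 <= cos t by apply: cos_ge0_pihalf; apply/andP; split; lra.
  lra.
have [t2|t2] := leP t pi.
  exists (t - pi / 2); first by apply/andP; split; lra.
  by split; [rewrite -cosDpihalf subrK | lra].
have [t3|t3] := leP t (3 * pi / 2).
  exists (3 * pi / 2 - t); first by apply/andP; split; lra.
  split; last by lra.
  by rewrite -sinN opprB -cosD3pihalf subrK.
exists (t - 3 * pi / 2); first by apply/andP; split; lra.
split; last by lra.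
have : 0 <= sin (t - 3 * pi / 2) by apply: sin_ge0_pi; apply/andP; split; lra.
by rewrite -[in cos t](subrK (3 * pi / 2) t) cosD3pihalf; lra.
Qed.

Lemma zfun_le t : 0 <= t <= 2 * pi -> zfun h t <= h / 2.
Proof.
move=> /zfun_valley[s /andP[s_ge0 s_le] [_ ->]].
have := k_gt0; have := k_pi; nra.
Qed.

Definition Gamma_in_slab (u1 u2 u3 a b : R) := forall t, 0 <= t <= 2 * pi ->
  a <= u1 * cos t + u2 * sin t + u3 * zfun h t <= b.

Lemma Gamma_in_slabNx u1 u2 u3 a b :
  Gamma_in_slab u1 u2 u3 a b -> Gamma_in_slab (- u1) u2 u3 a b.
Proof.
move=> inS t /andP[t_ge0 t_le]; have pi_gt0 := @pi_gt0 R.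
have [t_lepi|t_gtpi] := leP t pi.
  have := inS (pi - t) (ltac:(apply/andP; split; lra)).
  rewrite zfun_reflect_pi ?t_ge0 // (addrC pi).
  by rewrite cosDpi sinDpi cosN sinN opprK mulrN mulNr.
have := inS (3 * pi - t) (ltac:(apply/andP; split; lra)).
rewrite zfun_reflect_3pi ?(ltW t_gtpi) //.
have -> : 3 * pi - t = (- t + pi) + pi *+ 2 by rewrite mulr2n; ring.
by rewrite cosD2pi sinD2pi cosDpi sinDpi cosN sinN opprK mulrN mulNr.
Qed.

Lemma Gamma_in_slabNy u1 u2 u3 a b :
  Gamma_in_slab u1 u2 u3 a b -> Gamma_in_slab u1 (- u2) u3 a b.
Proof.
move=> inS t /andP[t_ge0 t_le]; have pi_gt0 := @pi_gt0 R.
have := inS (2 * pi - t) (ltac:(apply/andP; split; lra)).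
rewrite zfun_reflect_2pi ?t_ge0 //.
have -> : 2 * pi - t = - t + pi *+ 2 by rewrite mulr2n; ring.
by rewrite cosD2pi sinD2pi cosN sinN mulrN mulNr.
Qed.

Lemma Gamma_in_slab_norm u1 u2 u3 a b :
  Gamma_in_slab u1 u2 u3 a b -> Gamma_in_slab `|u1| `|u2| u3 a b.
Proof.
move=> inS.
have inS1 : Gamma_in_slab `|u1| u2 u3 a b.
  by have [/ger0_norm ->|/ltr0_norm ->] := leP 0 u1; last exact: Gamma_in_slabNx.
by have [/ger0_norm ->|/ltr0_norm ->] := leP 0 u2; last exact: Gamma_in_slabNy.
Qed.

Lemma Gamma_in_slab_gap r al u3 a b t s :
  Gamma_in_slab (r * cos al) (r * sin al) u3 a b ->
  0 <= t -> t <= s -> s <= pi / 2 ->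
  r * (cos (t - al) - sin (t - al - s)) + u3 * (h - k * s) <= b - a.
Proof.
move=> inS t_ge0 t_le_s s_le; have pi_gt0 := @pi_gt0 R.
have polarE x : r * cos al * cos x + r * sin al * sin x = r * cos (x - al).
  by rewrite cosB; ring.
have /andP[_ le_b] := inS t (ltac:(apply/andP; split; lra)).
have /andP[a_le _] := inS (t - s + 3 * pi / 2) (ltac:(apply/andP; split; lra)).
move: le_b a_le; rewrite !polarE.
have -> : t - s + 3 * pi / 2 - al = (t - al - s) + 3 * pi / 2 by ring.
rewrite cosD3pihalf -(zfun_drop t_ge0 t_le_s s_le) mulrBr.
lra.
Qed.

Lemma Gamma_in_slab_width_ge u1 u2 u3 a b s : 0 <= u1 -> 0 <= u2 ->
  Gamma_in_slab u1 u2 u3 a b -> 0 <= s <= pi / 2 ->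
  Num.sqrt (u1 ^+ 2 + u2 ^+ 2) * (1 + sin s) + u3 * (h - k * s) <= b - a.
Proof.
move=> u1_ge0 u2_ge0 inS /andP[s_ge0 s_le].
have [al /andP[al_ge0 al_le] [u1E u2E]] := polar_nonneg u1_ge0 u2_ge0.
set r := Num.sqrt _ in u1E u2E *.
have r_ge0 : 0 <= r := sqrtr_ge0 _.
rewrite u1E u2E in inS.
have [al_le_s|s_lt_al] := leP al s.
  have := Gamma_in_slab_gap inS al_ge0 al_le_s s_le.
  by rewrite subrr cos0 sub0r sinN opprK.
have := Gamma_in_slab_gap inS s_ge0 (lexx s) s_le.
have -> : s - al - s = - al by ring.
rewrite sinN opprK -cosN opprB.
have := cosB_add_sin_ge s_ge0 (ltW s_lt_al) al_le.
move=> /(ler_wpM2l r_ge0); lra.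
Qed.

Lemma Gammabar_slab_of_Gamma_slab (u1 u2 u3 a b : R) :
  (u1, u2, u3) != (0, 0, 0) ->
  (forall p, Gamma h p -> a <= u1 * p.1.1 + u2 * p.1.2 + u3 * p.2 <= b) ->
  exists (v1 v2 a' b' : R), (v1, v2) != (0, 0) /\
    (forall q, Gammabar h q -> a' <= v1 * q.1 + v2 * q.2 <= b') /\
    `|b - a| / Num.sqrt (u1 ^+ 2 + u2 ^+ 2 + u3 ^+ 2) =
    `|b' - a'| / Num.sqrt (v1 ^+ 2 + v2 ^+ 2).
Proof.
wlog u3_ge0 : u1 u2 u3 a b / 0 <= u3 => [wlog_u3|u_neq0 inS].
  move=> u_neq0 inS; have [u3_ge0|u3_lt0] := leP 0 u3; first exact: wlog_u3.
  have Nu3_ge0 : 0 <= - u3 by lra.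
  have Nu_neq0 : (- u1, - u2, - u3) != (0, 0, 0).
    apply: contraNneq u_neq0 => -[u1_0 u2_0 u3_0].
    by rewrite -[u1]opprK -[u2]opprK -[u3]opprK u1_0 u2_0 u3_0 oppr0.
  have inNS p : Gamma h p -> - b <= - u1 * p.1.1 + - u2 * p.1.2 + - u3 * p.2 <= - a.
    by move=> /inS /andP[a_le le_b]; apply/andP; split; lra.
  have [v1 [v2 [a' [b' [v_neq0 [inS' widthE]]]]]] :=
    wlog_u3 _ _ _ _ _ Nu3_ge0 Nu_neq0 inNS.
  exists v1, v2, a', b'; split => //; split => //.
  by rewrite -widthE !sqrrN opprK addrC.
have inS_param : Gamma_in_slab u1 u2 u3 a b.
  by move=> t t_in; apply: (inS (cos t, sin t, zfun h t)); exists t.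
set r := Num.sqrt (u1 ^+ 2 + u2 ^+ 2).
have r_ge0 : 0 <= r := sqrtr_ge0 _.
have r2E : r ^+ 2 = u1 ^+ 2 + u2 ^+ 2 by rewrite sqr_sqrtr // addr_ge0 // sqr_ge0.
exists r, u3, (r + u3 * (h / 2) - (b - a)), (r + u3 * (h / 2)); split; [|split].
- apply: contraNneq u_neq0 => -[r0 ->].
  have u12_0 : u1 ^+ 2 + u2 ^+ 2 = 0 by rewrite -r2E r0 expr0n.
  by have [-> ->] : u1 = 0 /\ u2 = 0 by split; nra.
- move=> _ [t [t_in ->]] /=.
  have [s s_in [cos_ge zE]] := zfun_valley t_in.
  have := Gamma_in_slab_width_ge (normr_ge0 u1) (normr_ge0 u2)
    (Gamma_in_slab_norm inS_param) s_in.
  rewrite !real_normK ?num_real // -/r.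
  have : r * cos t <= r by rewrite ler_piMr // cos_le1.
  have : r * - sin s <= r * cos t by rewrite ler_wpM2l.
  have : u3 * zfun h t <= u3 * (h / 2) by rewrite ler_wpM2l // zfun_le.
  rewrite zE; lra.
- by rewrite r2E; congr (`| _ | / _); ring.
Qed.

End Helix.

Theorem lemma5p1 (R : realType) (h : R) (hpos : 0 < h) :
  width3 (Gamma h) = width2 (Gammabar h).
Proof.
rewrite /width3 /width2; congr inf; apply/seteqP; split => d.
- move=> [u1 [u2 [u3 [a [b [u_neq0 [inS ->]]]]]]].
  exact: Gammabar_slab_of_Gamma_slab.
- move=> [u1 [u2 [a [b [u_neq0 [inS ->]]]]]].
  exists u1, 0, u2, a, b; split; [|split].
  + by apply: contraNneq u_neq0 => -[-> ->].
  + move=> _ [t [t_in ->]] /=; rewrite mul0r addr0.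
    by apply: (inS (cos t, zfun h t)); exists t.
  + by rewrite expr0n /= addr0.
Qed.
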